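(* Let $f=(v_1,v_2,v_3)$ be a non-degenerate counterclockwise triangle with vertices $z_1,z_2,z_3\in\mathbb C$, circumradius $R(f)$ and (positive) area $\mathrm{Area}(f)=\frac1{4\mathrm i}\big((z_3-z_1)(\bar z_2-\bar z_1)-(z_2-z_1)(\bar z_3-\bar z_1)\big)$. Let $D(f)_{i\bar j}=-\frac{\partial^2}{\partial z_i\partial\bar z_j}\mathrm{Vol}(f)$, $i,j\in\{1,2,3\}$. Then for all $\Phi,\Psi:\{v_1,v_2,v_3\}\to\mathbb C$, $$\sum_{i,j=1}^3\Phi(v_i)D(f)_{i\bar j}\overline{\Psi(v_j)}=\frac{\mathrm{Area}(f)}{R(f)^2}\,\overline\nabla\Phi(f)\,\nabla\overline\Psi(f),$$ where $\overline\Psi$ denotes the function $v\mapsto\overline{\Psi(v)}$.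
   Context: $\mathrm{Vol}(f)=\mathrm{Im}\,\mathrm{Li}_2(u)+\ln|u|\,\mathrm{Arg}(1-u)$, $u=\frac{z_3-z_1}{z_2-z_1}$ (Bloch–Wigner function; hyperbolic volume of the ideal tetrahedron $(z_1,z_2,z_3,\infty)$). Discrete derivatives of a function $\Phi$ on the vertices: $\nabla\Phi(f)=\frac1{4\mathrm i}\frac{\Phi(v_1)(\bar z_3-\bar z_2)+\Phi(v_2)(\bar z_1-\bar z_3)+\Phi(v_3)(\bar z_2-\bar z_1)}{\mathrm{Area}(f)}$ and $\overline\nabla\Phi(f)=-\frac1{4\mathrm i}\frac{\Phi(v_1)(z_3-z_2)+\Phi(v_2)(z_1-z_3)+\Phi(v_3)(z_2-z_1)}{\mathrm{Area}(f)}$. Derivatives in $z_i,\bar z_j$ are Wirtinger derivatives. *)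

From Stdlib Require Import Reals.
From Coquelicot Require Import Coquelicot.
Open Scope R_scope.

(* Principal argument Arg w in (-PI, PI], with Arg 0 = 0. *)
Definition Arg (w : C) : R :=
  let x := fst w in let y := snd w in
  if Rlt_dec 0 x then atan (y / x)
  else if Rlt_dec x 0 then
    (if Rle_dec 0 y then atan (y / x) + PI else atan (y / x) - PI)
  else if Rlt_dec 0 y then PI / 2
  else if Rlt_dec y 0 then - (PI / 2)
  else 0.

(* Imaginary part of the (principal branch of the) dilogarithm,
   Li2(u) = - int_0^u ln(1-t)/t dt = - int_0^1 Log(1 - s u)/s ds,
   hence Im Li2(u) = - int_0^1 Arg(1 - s u)/s ds
   (valid for u outside [1, +oo), in particular for non-real u). *)
Definition ImLi2 (u : C) : R :=
  - RInt (fun s => Arg (Cminus (RtoC 1) (Cmult (RtoC s) u)) / s) 0 1.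

Definition BW (u : C) : R := ImLi2 u + ln (Cmod u) * Arg (Cminus (RtoC 1) u).

(* Vertex configurations: z 0, z 1, z 2 are z_1, z_2, z_3. *)
Definition Vol (z : nat -> C) : R :=
  BW (Cdiv (Cminus (z 2%nat) (z 0%nat)) (Cminus (z 1%nat) (z 0%nat))).

Definition upd (z : nat -> C) (i : nat) (w : C) : nat -> C :=
  fun k => if Nat.eqb k i then w else z k.

Definition pd (G : (nat -> C) -> C) (i : nat) (d : C) (z : nat -> C) : C :=
  (Derive (fun t => fst (G (upd z i (Cplus (z i) (Cmult (RtoC t) d))))) 0,
   Derive (fun t => snd (G (upd z i (Cplus (z i) (Cmult (RtoC t) d))))) 0).

Definition wz (G : (nat -> C) -> C) (i : nat) (z : nat -> C) : C :=
  Cmult (RtoC (/2)) (Cminus (pd G i (RtoC 1) z) (Cmult Ci (pd G i Ci z))).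
Definition wzbar (G : (nat -> C) -> C) (i : nat) (z : nat -> C) : C :=
  Cmult (RtoC (/2)) (Cplus (pd G i (RtoC 1) z) (Cmult Ci (pd G i Ci z))).

Definition Dmat (z : nat -> C) (i j : nat) : C :=
  Copp (wz (fun w => wzbar (fun w' => RtoC (Vol w')) j w) i z).

Definition Area (z : nat -> C) : C :=
  Cdiv (Cminus (Cmult (Cminus (z 2%nat) (z 0%nat)) (Cminus (Cconj (z 1%nat)) (Cconj (z 0%nat))))
               (Cmult (Cminus (z 1%nat) (z 0%nat)) (Cminus (Cconj (z 2%nat)) (Cconj (z 0%nat)))))
       (Cmult (RtoC 4) Ci).

Definition nabla (z : nat -> C) (Phi : nat -> C) : C :=
  Cdiv (Cplus (Cplus (Cmult (Phi 0%nat) (Cminus (Cconj (z 2%nat)) (Cconj (z 1%nat))))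
                     (Cmult (Phi 1%nat) (Cminus (Cconj (z 0%nat)) (Cconj (z 2%nat)))))
              (Cmult (Phi 2%nat) (Cminus (Cconj (z 1%nat)) (Cconj (z 0%nat)))))
       (Cmult (Cmult (RtoC 4) Ci) (Area z)).
Definition nablabar (z : nat -> C) (Phi : nat -> C) : C :=
  Copp (Cdiv (Cplus (Cplus (Cmult (Phi 0%nat) (Cminus (z 2%nat) (z 1%nat)))
                           (Cmult (Phi 1%nat) (Cminus (z 0%nat) (z 2%nat))))
                    (Cmult (Phi 2%nat) (Cminus (z 1%nat) (z 0%nat))))
             (Cmult (Cmult (RtoC 4) Ci) (Area z))).

Definition sum3 (f : nat -> C) : C := Cplus (Cplus (f 0%nat) (f 1%nat)) (f 2%nat).

(* With [u = (z_3 - z_1) / (z_2 - z_1)] we have [Vol = BW u], and [u] is holomorphic in each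
   vertex, so [d^2 Vol / dz_i dzbar_j = (d^2 BW / du dubar) (du / dz_i) conj (du / dz_j)]: the
   matrix [D(f)] has rank one.  Differentiating [Im Li2] under the integral sign gives the
   gradient of [BW] in closed form, and its mixed Wirtinger derivative is
   [- Im u / (2 |u|^2 |1 - u|^2)].  The derivatives [du / dz_i] are the edges opposite [v_i]
   divided by [(z_2 - z_1)^2], so both sides are multiples of [nablabar Phi * nabla conj Psi];
   the constants agree by the circumradius formula [R = |z_2 - z_1| |z_3 - z_1| |z_3 - z_2| / (4 Area)]. *)

From Stdlib Require Import Reals Lra Lia FunctionalExtensionality.
From Coquelicot Require Import Coquelicot.
Open Scope R_scope.
Set Bullet Behavior "Strict Subproofs".

(* Coquelicot states derivatives in the carrier of [R_AbsRing]; retype the goal so that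
   [field] and [ring] recognise it. *)
Ltac Rfield := cbv beta; match goal with |- @eq _ ?a ?b => change (@eq R a b) end; field.
Ltac Rring := cbv beta; match goal with |- @eq _ ?a ?b => change (@eq R a b) end; ring.

(* Coquelicot's generic lemmas specialised to real functions, where unification cannot find
   the instance by itself. *)
Lemma is_derive_Rplus (f g : R -> R) x df dg : is_derive f x df -> is_derive g x dg ->
  is_derive (fun y => f y + g y) x (df + dg).
Proof. intros; apply (is_derive_plus f g); auto. Qed.

Lemma is_derive_Rminus (f g : R -> R) x df dg : is_derive f x df -> is_derive g x dg ->
  is_derive (fun y => f y - g y) x (df - dg).
Proof. intros; apply (is_derive_minus f g); auto. Qed.

Lemma is_derive_Ropp (f : R -> R) x l : is_derive f x l -> is_derive (fun y => - f y) x (- l).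
Proof. intros; apply (is_derive_opp f); auto. Qed.

Lemma is_derive_Rmult (f g : R -> R) x df dg : is_derive f x df -> is_derive g x dg ->
  is_derive (fun y => f y * g y) x (df * g x + f x * dg).
Proof. intros; apply (is_derive_mult f g); auto; intros; apply Rmult_comm. Qed.

Lemma is_derive_Rconst (c x : R) : is_derive (fun _ => c) x 0.
Proof. exact (is_derive_const c x). Qed.

Lemma is_derive_eq (f : R -> R) x l l' : is_derive f x l -> l = l' -> is_derive f x l'.
Proof. now intros H <-. Qed.

Lemma is_derive_continuous (f : R -> R) x l : is_derive f x l -> continuous f x.
Proof. intros H; apply (@ex_derive_continuous R_AbsRing R_NormedModule); now exists l. Qed.

Lemma ex_RInt_continuous_R (f : R -> R) a b :
  (forall x, Rmin a b <= x <= Rmax a b -> continuous f x) -> ex_RInt f a b.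
Proof. apply (@ex_RInt_continuous R_CompleteNormedModule). Qed.

Lemma RInt_Ropp (f : R -> R) a b : ex_RInt f a b -> RInt (fun x => - f x) a b = - RInt f a b.
Proof. apply (@RInt_opp R_CompleteNormedModule). Qed.

Lemma RInt_Rplus (f g : R -> R) a b : ex_RInt f a b -> ex_RInt g a b ->
  RInt (fun x => f x + g x) a b = RInt f a b + RInt g a b.
Proof. apply (@RInt_plus R_CompleteNormedModule). Qed.

Lemma ex_RInt_Rscal (f : R -> R) a b l : ex_RInt f a b -> ex_RInt (fun x => l * f x) a b.
Proof. apply (@ex_RInt_scal R_CompleteNormedModule). Qed.

Lemma ex_RInt_Ropp (f : R -> R) a b : ex_RInt f a b -> ex_RInt (fun x => - f x) a b.
Proof. apply (@ex_RInt_opp R_CompleteNormedModule). Qed.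

Lemma RInt_Rscal (f : R -> R) a b l : ex_RInt f a b -> RInt (fun x => l * f x) a b = l * RInt f a b.
Proof. intros; apply (@RInt_scal R_CompleteNormedModule); auto. Qed.

Lemma RInt_derive_R (f df : R -> R) a b :
  (forall t, Rmin a b <= t <= Rmax a b -> is_derive f t (df t)) ->
  (forall t, Rmin a b <= t <= Rmax a b -> continuous df t) -> RInt df a b = f b - f a.
Proof.
  intros. apply (@is_RInt_unique R_CompleteNormedModule), (@is_RInt_derive R_CompleteNormedModule); auto.
Qed.

Lemma continuous_locally_pos (f : R -> R) t :
  continuous f t -> 0 < f t -> locally t (fun s => 0 < f s).
Proof.
  intros Hc Hp.
  apply (filter_imp (fun s => Rabs (f s - f t) < f t)).
  - intros s Hs; apply Rabs_def2 in Hs; lra.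
  - exact (proj1 (filterlim_locally f (f t)) Hc (mkposreal _ Hp)).
Qed.

Lemma continuous_locally_neg (f : R -> R) t :
  continuous f t -> f t < 0 -> locally t (fun s => f s < 0).
Proof.
  intros Hc Hn.
  apply (filter_imp (fun s => 0 < - f s)); [intros; lra|].
  apply (continuous_locally_pos (fun s => - f s)); [|lra].
  apply (continuous_opp f); exact Hc.
Qed.

(** * Derivative of the argument *)

Lemma atan_inv_pos v : 0 < v -> atan v = PI/2 - atan (/ v).
Proof.
  intros Hv. rewrite <- (atan_inv (/ v)) by now apply Rinv_0_lt_compat.
  now rewrite Rinv_inv.
Qed.

Lemma atan_inv_neg v : v < 0 -> atan v = - (PI/2) - atan (/ v).
Proof.
  intros Hv. assert (Hw := atan_inv_pos (- v) ltac:(lra)).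
  rewrite atan_opp, Rinv_opp, atan_opp in Hw. lra.
Qed.

Lemma Arg_re_pos a b : 0 < a -> Arg (a, b) = atan (b / a).
Proof. intros Ha. unfold Arg; cbn. now destruct (Rlt_dec 0 a). Qed.

Lemma Arg_im_pos a b : 0 < b -> Arg (a, b) = PI/2 - atan (a / b).
Proof.
  intros Hb. unfold Arg; cbn.
  destruct (Rlt_dec 0 a); [|destruct (Rlt_dec a 0); [destruct (Rle_dec 0 b); [|lra]|]].
  - rewrite atan_inv_pos by (apply Rdiv_pos_pos; lra). do 3 f_equal. field; lra.
  - rewrite atan_inv_neg by (apply Rdiv_pos_neg; lra).
    replace (/ (b / a)) with (a / b) by (field; lra). lra.
  - replace a with 0 by lra. destruct (Rlt_dec 0 b); [|lra].
    unfold Rdiv; rewrite Rmult_0_l, atan_0. lra.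
Qed.

Lemma Arg_im_neg a b : b < 0 -> Arg (a, b) = - (PI/2) - atan (a / b).
Proof.
  intros Hb. unfold Arg; cbn.
  destruct (Rlt_dec 0 a); [|destruct (Rlt_dec a 0); [destruct (Rle_dec 0 b); [lra|]|]].
  - rewrite atan_inv_neg by (apply Rdiv_neg_pos; lra). do 3 f_equal. field; lra.
  - rewrite atan_inv_pos by (apply Rdiv_neg_neg; lra).
    replace (/ (b / a)) with (a / b) by (field; lra). lra.
  - replace a with 0 by lra. destruct (Rlt_dec 0 b); [lra|]. destruct (Rlt_dec b 0); [|lra].
    unfold Rdiv; rewrite Rmult_0_l, atan_0. lra.
Qed.

Lemma is_derive_atan_comp (g : R -> R) t dg :
  is_derive g t dg -> is_derive (fun s => atan (g s)) t (dg / (1 + g t ^ 2)).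
Proof.
  intros H. eapply is_derive_eq; [exact (is_derive_comp atan g t _ dg (is_derive_atan (g t)) H)|].
  cbn; unfold scal, Rsqr; cbn; unfold mult; cbn. Rfield. nra.
Qed.

(* Off the branch cut each of the three local formulas for [Arg] is [const +- atan] of a
   quotient, and all three have the same derivative. *)
Lemma is_derive_Arg (a b : R -> R) t da db :
  is_derive a t da -> is_derive b t db -> 0 < a t \/ b t <> 0 ->
  is_derive (fun s => Arg (a s, b s)) t ((a t * db - b t * da) / (a t ^ 2 + b t ^ 2)).
Proof.
  intros Ha Hb Hcut.
  assert (Ca := is_derive_continuous a t da Ha).
  assert (Cb := is_derive_continuous b t db Hb).
  destruct (Rlt_dec 0 (a t)) as [Hp|Hp]; [|destruct (Rlt_dec (b t) 0) as [Hn|Hn]].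
  - apply (is_derive_ext_loc (fun s => atan (b s / a s))).
    + eapply filter_imp; [|exact (continuous_locally_pos a t Ca Hp)].
      intros s Hs. now rewrite Arg_re_pos.
    + eapply is_derive_eq; [apply is_derive_atan_comp, is_derive_div; eauto; lra|].
      Rfield. split; [nra|lra].
  - apply (is_derive_ext_loc (fun s => - (PI/2) - atan (a s / b s))).
    + eapply filter_imp; [|exact (continuous_locally_neg b t Cb Hn)].
      intros s Hs. now rewrite Arg_im_neg.
    + eapply is_derive_eq.
      * apply is_derive_Rminus; [apply is_derive_Rconst|].
        apply is_derive_atan_comp, is_derive_div; eauto; lra.
      * Rfield. split; [nra|lra].
  - assert (Hq : 0 < b t) by (destruct Hcut; lra).
    apply (is_derive_ext_loc (fun s => PI/2 - atan (a s / b s))).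
    + eapply filter_imp; [|exact (continuous_locally_pos b t Cb Hq)].
      intros s Hs. now rewrite Arg_im_pos.
    + eapply is_derive_eq.
      * apply is_derive_Rminus; [apply is_derive_Rconst|].
        apply is_derive_atan_comp, is_derive_div; eauto; lra.
      * Rfield. split; [nra|lra].
Qed.

(** * Partial derivatives of [Im Li2] *)

(* For [u = (x, y)], [arg_line x y s] and [sqnorm_line x y s] are the argument and the
   squared modulus of [1 - s u]. *)
Definition arg_line x y s := Arg (1 - s * x, - (s * y)).
Definition sqnorm_line x y s := (1 - s * x) ^ 2 + (s * y) ^ 2.

(* The integrand of [ImLi2], extended continuously to [s = 0]. *)
Definition li2_kernel x y s := if Req_EM_T s 0 then - y else arg_line x y s / s.

Lemma sqnorm_line_pos x y s : 0 < y -> 0 < sqnorm_line x y s.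
Proof.
  intros Hy. unfold sqnorm_line. destruct (Req_dec s 0) as [->|Hs]; [nra|].
  assert (0 < (s * y) ^ 2) by (apply pow2_gt_0, Rmult_integral_contrapositive; lra).
  assert (0 <= (1 - s * x) ^ 2) by apply pow2_ge_0. lra.
Qed.

Lemma arg_line_0 x y : arg_line x y 0 = 0.
Proof.
  unfold arg_line. rewrite Arg_re_pos by lra.
  replace (- (0 * y) / (1 - 0 * x)) with 0 by Rfield. apply atan_0.
Qed.

Lemma is_derive_arg_line x y s : 0 < y -> is_derive (arg_line x y) s (- y / sqnorm_line x y s).
Proof.
  intros Hy. assert (Hs := sqnorm_line_pos x y s Hy). unfold sqnorm_line in *.
  eapply is_derive_eq.
  - apply (is_derive_Arg (fun s => 1 - s * x) (fun s => - (s * y)) s (- x) (- y)).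
    + auto_derive; [exact I|Rfield].
    + auto_derive; [exact I|Rfield].
    + destruct (Req_dec s 0) as [->|H0]; [left; lra|right].
      intros H. apply H0, (Rmult_eq_reg_r y); lra.
  - Rfield. lra.
Qed.

Lemma continuous_difference_quotient (f : R -> R) l :
  is_derive f 0 l -> f 0 = 0 -> continuous (fun s => if Req_EM_T s 0 then l else f s / s) 0.
Proof.
  intros Hd Hf0 P [eps HP].
  destruct (proj1 (is_derive_Reals f 0 l) Hd eps (cond_pos eps)) as [delta Hdel].
  exists delta. intros r Hr. apply HP.
  destruct (Req_EM_T 0 0) as [_|]; [|lra].
  destruct (Req_EM_T r 0) as [->|Hr0]; [apply ball_center|].
  assert (Hr' : Rabs r < delta).
  { unfold ball in Hr; cbn in Hr; unfold AbsRing_ball, abs, minus, plus, opp in Hr; cbn in Hr.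
    now rewrite Ropp_0, Rplus_0_r in Hr. }
  specialize (Hdel r Hr0 Hr'). rewrite Hf0, Rplus_0_l, Rminus_0_r in Hdel.
  exact Hdel.
Qed.

Lemma continuous_li2_kernel x y s : 0 < y -> continuous (li2_kernel x y) s.
Proof.
  intros Hy. destruct (Req_dec s 0) as [->|Hs].
  - eapply continuous_ext; [|apply (continuous_difference_quotient (arg_line x y) (- y))].
    + intros r. unfold li2_kernel. now destruct (Req_EM_T r 0).
    + eapply is_derive_eq; [apply is_derive_arg_line; lra|].
      unfold sqnorm_line. Rfield.
    + apply arg_line_0.
  - apply (continuous_ext_loc _ (fun r => arg_line x y r / r)).
    + destruct (Rlt_dec 0 s) as [Hp|Hn].
      * eapply filter_imp; [|exact (continuous_locally_pos (fun r => r) s (continuous_id s) Hp)].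
        intros r Hr. unfold li2_kernel. destruct (Req_EM_T r 0); [lra|reflexivity].
      * eapply filter_imp; [|apply (continuous_locally_neg (fun r => r) s (continuous_id s)); lra].
        intros r Hr. unfold li2_kernel. destruct (Req_EM_T r 0); [lra|reflexivity].
    + eapply is_derive_continuous, is_derive_div; [apply is_derive_arg_line, Hy|apply is_derive_id|exact Hs].
Qed.

Lemma ImLi2_li2_kernel x y : ImLi2 (x, y) = - RInt (li2_kernel x y) 0 1.
Proof.
  unfold ImLi2. f_equal. apply RInt_ext. intros s Hs.
  rewrite Rmin_left, Rmax_right in Hs by lra.
  unfold li2_kernel. destruct (Req_EM_T s 0); [lra|]. unfold arg_line.
  f_equal. f_equal. unfold Cminus, Cmult, Cplus, Copp, RtoC; cbn. f_equal; ring.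
Qed.

Lemma is_derive_li2_kernel_x y u s : 0 < y ->
  is_derive (fun x => li2_kernel x y s) u (- (s * y) / sqnorm_line u y s).
Proof.
  intros Hy. assert (HS := sqnorm_line_pos u y s Hy). unfold sqnorm_line in *.
  destruct (Req_EM_T s 0) as [->|Hs].
  - apply (is_derive_ext (fun _ => - y)).
    + intros x. unfold li2_kernel. now destruct (Req_EM_T 0 0).
    + eapply is_derive_eq; [apply is_derive_Rconst|Rfield; lra].
  - apply (is_derive_ext (fun x => arg_line x y s / s)).
    + intros x. unfold li2_kernel. now destruct (Req_EM_T s 0).
    + eapply is_derive_eq; [apply is_derive_div; [|apply is_derive_Rconst|exact Hs]|].
      * apply (is_derive_Arg (fun x => 1 - s * x) (fun _ => - (s * y)) u (- s) 0).
        -- auto_derive; [exact I|Rfield].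
        -- apply is_derive_Rconst.
        -- right. intros H. apply Hs, (Rmult_eq_reg_r y); lra.
      * Rfield. split; lra.
Qed.

Lemma is_derive_li2_kernel_y x v s : 0 < v ->
  is_derive (fun y => li2_kernel x y s) v (- (1 - s * x) / sqnorm_line x v s).
Proof.
  intros Hv. assert (HS := sqnorm_line_pos x v s Hv). unfold sqnorm_line in *.
  destruct (Req_EM_T s 0) as [->|Hs].
  - apply (is_derive_ext (fun y => - y)).
    + intros y. unfold li2_kernel. now destruct (Req_EM_T 0 0).
    + auto_derive; [exact I|Rfield; lra].
  - apply (is_derive_ext (fun y => arg_line x y s / s)).
    + intros y. unfold li2_kernel. now destruct (Req_EM_T s 0).
    + eapply is_derive_eq; [apply is_derive_div; [|apply is_derive_Rconst|exact Hs]|].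
      * apply (is_derive_Arg (fun _ => 1 - s * x) (fun y => - (s * y)) v 0 (- s)).
        -- apply is_derive_Rconst.
        -- auto_derive; [exact I|Rfield].
        -- right. intros H. apply Hs, (Rmult_eq_reg_r v); lra.
      * Rfield. split; lra.
Qed.

Lemma continuity_2d_pt_sq f x y :
  continuity_2d_pt f x y -> continuity_2d_pt (fun u v => f u v ^ 2) x y.
Proof.
  intros. apply (continuity_2d_pt_ext (fun u v => f u v * f u v)); [intros; ring|].
  now apply continuity_2d_pt_mult.
Qed.

Lemma continuity_2d_pt_ln f x y :
  continuity_2d_pt f x y -> 0 < f x y -> continuity_2d_pt (fun u v => ln (f u v)) x y.
Proof.
  intros. apply continuity_1d_2d_pt_comp; auto.
  apply continuity_pt_filterlim, (is_derive_continuous _ _ _ (is_derive_ln _ H0)).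
Qed.

Lemma continuity_2d_pt_div f g x y : continuity_2d_pt f x y -> continuity_2d_pt g x y ->
  g x y <> 0 -> continuity_2d_pt (fun u v => f u v / g u v) x y.
Proof. intros. apply continuity_2d_pt_mult, continuity_2d_pt_inv; auto. Qed.

Ltac continuity_2d := repeat first
  [ apply continuity_2d_pt_div | apply continuity_2d_pt_inv | apply continuity_2d_pt_ln
  | apply continuity_2d_pt_sq | apply continuity_2d_pt_plus | apply continuity_2d_pt_minus
  | apply continuity_2d_pt_mult | apply continuity_2d_pt_opp | apply continuity_2d_pt_id1
  | apply continuity_2d_pt_id2 | apply continuity_2d_pt_const ].

Lemma continuous_div_sqnorm_line x y (p : R -> R) t : 0 < y -> ex_derive p t ->
  continuous (fun t => p t / sqnorm_line x y t) t.
Proof.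
  intros Hy Hp. apply (@ex_derive_continuous R_AbsRing R_NormedModule), ex_derive_div; auto.
  - unfold sqnorm_line. auto_derive. exact I.
  - apply Rgt_not_eq, sqnorm_line_pos, Hy.
Qed.

Lemma ex_RInt_div_sqnorm_line x y (p : R -> R) : 0 < y -> (forall t, ex_derive p t) ->
  ex_RInt (fun t => p t / sqnorm_line x y t) 0 1.
Proof. intros Hy Hp. apply ex_RInt_continuous_R. intros t _. now apply continuous_div_sqnorm_line. Qed.

Definition ImLi2_dx x y := RInt (fun t => t * y / sqnorm_line x y t) 0 1.
Definition ImLi2_dy x y := RInt (fun t => (1 - t * x) / sqnorm_line x y t) 0 1.

Lemma ex_RInt_ImLi2_dx x y : 0 < y -> ex_RInt (fun t => t * y / sqnorm_line x y t) 0 1.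
Proof. intros Hy. apply (ex_RInt_div_sqnorm_line x y (fun t => t * y) Hy). intros; auto_derive; exact I. Qed.

Lemma ex_RInt_ImLi2_dy x y : 0 < y -> ex_RInt (fun t => (1 - t * x) / sqnorm_line x y t) 0 1.
Proof. intros Hy. apply (ex_RInt_div_sqnorm_line x y (fun t => 1 - t * x) Hy). intros; auto_derive; exact I. Qed.

Lemma is_derive_ImLi2_x x y : 0 < y -> is_derive (fun u => ImLi2 (u, y)) x (ImLi2_dx x y).
Proof.
  intros Hy.
  apply (is_derive_ext (fun u => - RInt (li2_kernel u y) 0 1));
    [intros; symmetry; apply ImLi2_li2_kernel|].
  eapply is_derive_eq.
  { apply is_derive_Ropp, (is_derive_RInt_param (fun u t => li2_kernel u y t) 0 1 x).
    - apply filter_forall. intros u t _. eexists. now apply is_derive_li2_kernel_x.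
    - intros t _. apply (continuity_2d_pt_ext (fun u v => - (v * y) / sqnorm_line u y v)).
      + intros u v. symmetry. now apply is_derive_unique, is_derive_li2_kernel_x.
      + assert (H := sqnorm_line_pos x y t Hy). unfold sqnorm_line in *.
        continuity_2d. lra.
    - apply filter_forall. intros u. apply ex_RInt_continuous_R. intros s _.
      now apply continuous_li2_kernel. }
  unfold ImLi2_dx. rewrite (RInt_ext _ (fun t => - (t * y / sqnorm_line x y t))).
  - rewrite RInt_Ropp by now apply ex_RInt_ImLi2_dx. apply Ropp_involutive.
  - intros t _. rewrite (is_derive_unique _ _ _ (is_derive_li2_kernel_x _ _ t Hy)).
    Rfield. apply Rgt_not_eq, sqnorm_line_pos, Hy.
Qed.

Lemma is_derive_ImLi2_y x y : 0 < y -> is_derive (fun v => ImLi2 (x, v)) y (ImLi2_dy x y).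
Proof.
  intros Hy.
  assert (Hloc : locally y (fun v => 0 < v))
    by exact (continuous_locally_pos (fun v => v) y (continuous_id y) Hy).
  apply (is_derive_ext (fun v => - RInt (li2_kernel x v) 0 1));
    [intros; symmetry; apply ImLi2_li2_kernel|].
  eapply is_derive_eq.
  { apply is_derive_Ropp, (is_derive_RInt_param (fun v t => li2_kernel x v t) 0 1 y).
    - eapply filter_imp; [|exact Hloc]. intros v Hv t _. eexists.
      now apply is_derive_li2_kernel_y.
    - intros t _. apply (continuity_2d_pt_ext_loc (fun v s => - (1 - s * x) / sqnorm_line x v s)).
      + exists (mkposreal y Hy). intros v s Hv _. cbn in Hv. apply Rabs_def2 in Hv.
        symmetry. apply is_derive_unique, is_derive_li2_kernel_y. lra.
      + assert (H := sqnorm_line_pos x y t Hy). unfold sqnorm_line in *.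
        continuity_2d. lra.
    - eapply filter_imp; [|exact Hloc]. intros v Hv. apply ex_RInt_continuous_R.
      intros s _. now apply continuous_li2_kernel. }
  unfold ImLi2_dy. rewrite (RInt_ext _ (fun t => - ((1 - t * x) / sqnorm_line x y t))).
  - rewrite RInt_Ropp by now apply ex_RInt_ImLi2_dy. apply Ropp_involutive.
  - intros t _. rewrite (is_derive_unique _ _ _ (is_derive_li2_kernel_y _ _ t Hy)).
    Rfield. apply Rgt_not_eq, sqnorm_line_pos, Hy.
Qed.

(* [x d/dx + y d/dy] of [ImLi2] integrates the [s]-derivative of [arg_line]. *)
Lemma ImLi2_radial_derivative x y : 0 < y ->
  x * ImLi2_dx x y + y * ImLi2_dy x y = - arg_line x y 1.
Proof.
  intros Hy. unfold ImLi2_dx, ImLi2_dy.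
  assert (Hdx := ex_RInt_ImLi2_dx x y Hy). assert (Hdy := ex_RInt_ImLi2_dy x y Hy).
  rewrite <- (RInt_Rscal _ 0 1 x) by exact Hdx.
  rewrite <- (RInt_Rscal _ 0 1 y) by exact Hdy.
  rewrite <- RInt_Rplus by now apply ex_RInt_Rscal.
  rewrite (RInt_ext _ (fun t => - (- y / sqnorm_line x y t))).
  - rewrite RInt_Ropp, (RInt_derive_R (arg_line x y)), arg_line_0.
    + ring.
    + intros t _. now apply is_derive_arg_line.
    + intros t _. apply continuous_div_sqnorm_line; [exact Hy|apply ex_derive_const].
    + apply (ex_RInt_div_sqnorm_line x y (fun _ => - y) Hy). intros; apply ex_derive_const.
  - intros t _. assert (H := sqnorm_line_pos x y t Hy). Rfield. lra.
Qed.

(* [x d/dy - y d/dx] of [ImLi2] integrates the [s]-derivative of [- ln |1 - s u|]. *)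
Lemma ImLi2_angular_derivative x y : 0 < y ->
  x * ImLi2_dy x y - y * ImLi2_dx x y = - (ln (sqnorm_line x y 1) / 2).
Proof.
  intros Hy. unfold ImLi2_dx, ImLi2_dy.
  assert (Hdx := ex_RInt_ImLi2_dx x y Hy). assert (Hdy := ex_RInt_ImLi2_dy x y Hy).
  rewrite <- (RInt_Rscal _ 0 1 x) by exact Hdy.
  rewrite <- (RInt_Rscal _ 0 1 y) by exact Hdx.
  unfold Rminus at 1. rewrite <- RInt_Ropp by now apply ex_RInt_Rscal.
  rewrite <- RInt_Rplus by
    first [exact (ex_RInt_Rscal _ _ _ _ Hdy) | exact (ex_RInt_Ropp _ _ _ (ex_RInt_Rscal _ _ _ _ Hdx))].
  rewrite (RInt_ext _ (fun t => (x * (1 - t * x) - t * y ^ 2) / sqnorm_line x y t)).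
  - rewrite (RInt_derive_R (fun t => - (ln (sqnorm_line x y t) / 2))).
    + unfold sqnorm_line at 2. replace ((1 - 0 * x) ^ 2 + (0 * y) ^ 2) with 1 by ring.
      rewrite ln_1. Rfield.
    + intros t _. assert (H := sqnorm_line_pos x y t Hy). unfold sqnorm_line in *.
      auto_derive; [lra|Rfield; lra].
    + intros t _. apply continuous_div_sqnorm_line; [exact Hy|]. auto_derive. exact I.
  - intros t _. assert (H := sqnorm_line_pos x y t Hy). Rfield. lra.
Qed.

Lemma ImLi2_dx_closed x y : 0 < y ->
  ImLi2_dx x y = (y * (ln (sqnorm_line x y 1) / 2) - x * arg_line x y 1) / (x ^ 2 + y ^ 2).
Proof.
  intros Hy. apply (Rmult_eq_reg_l (x ^ 2 + y ^ 2)); [|nra].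
  replace ((x ^ 2 + y ^ 2) * ImLi2_dx x y) with
    (x * (x * ImLi2_dx x y + y * ImLi2_dy x y) - y * (x * ImLi2_dy x y - y * ImLi2_dx x y)) by ring.
  rewrite ImLi2_radial_derivative, ImLi2_angular_derivative by exact Hy. field. nra.
Qed.

Lemma ImLi2_dy_closed x y : 0 < y ->
  ImLi2_dy x y = (- y * arg_line x y 1 - x * (ln (sqnorm_line x y 1) / 2)) / (x ^ 2 + y ^ 2).
Proof.
  intros Hy. apply (Rmult_eq_reg_l (x ^ 2 + y ^ 2)); [|nra].
  replace ((x ^ 2 + y ^ 2) * ImLi2_dy x y) with
    (y * (x * ImLi2_dx x y + y * ImLi2_dy x y) + x * (x * ImLi2_dy x y - y * ImLi2_dx x y)) by ring.
  rewrite ImLi2_radial_derivative, ImLi2_angular_derivative by exact Hy. field. nra.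
Qed.

(** * The gradient of the Bloch-Wigner function *)

Lemma ln_sqrt_half q : 0 < q -> ln (sqrt q) = ln q / 2.
Proof.
  intros Hq. assert (H := sqrt_lt_R0 q Hq).
  rewrite <- (sqrt_sqrt q) at 2 by lra. rewrite ln_mult by exact H. field.
Qed.

Lemma BW_arg_line x y : 0 < y -> BW (x, y) = ImLi2 (x, y) + ln (x ^ 2 + y ^ 2) / 2 * arg_line x y 1.
Proof.
  intros Hy. unfold BW. f_equal. f_equal.
  - unfold Cmod; cbn. apply ln_sqrt_half. nra.
  - unfold arg_line, Cminus, Cplus, Copp, RtoC; cbn. f_equal; f_equal; ring.
Qed.

(* In terms of [u = (x, y)]: [BW_dx + i BW_dy = - i (ln|1-u| / conj u + ln|u| / (1 - conj u))]. *)
Definition BW_dx x y :=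
  y * (ln (sqnorm_line x y 1) / 2) / (x ^ 2 + y ^ 2) - y * (ln (x ^ 2 + y ^ 2) / 2) / sqnorm_line x y 1.
Definition BW_dy x y :=
  - (x * (ln (sqnorm_line x y 1) / 2) / (x ^ 2 + y ^ 2)
     + (1 - x) * (ln (x ^ 2 + y ^ 2) / 2) / sqnorm_line x y 1).

Lemma is_derive_BW_x x y : 0 < y -> is_derive (fun u => BW (u, y)) x (BW_dx x y).
Proof.
  intros Hy.
  apply (is_derive_ext (fun u => ImLi2 (u, y) + ln (u ^ 2 + y ^ 2) / 2 * arg_line u y 1));
    [intros; symmetry; now apply BW_arg_line|].
  assert (H1 := sqnorm_line_pos x y 1 Hy).
  eapply is_derive_eq.
  { apply is_derive_Rplus; [now apply is_derive_ImLi2_x|]. apply is_derive_Rmult.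
    - auto_derive; [nra|reflexivity].
    - apply (is_derive_Arg (fun u => 1 - 1 * u) (fun _ => - (1 * y)) x (- 1) 0).
      + auto_derive; [exact I|Rfield].
      + apply is_derive_Rconst.
      + right. lra. }
  rewrite ImLi2_dx_closed by exact Hy. unfold BW_dx, sqnorm_line in *. Rfield. split; nra.
Qed.

Lemma is_derive_BW_y x y : 0 < y -> is_derive (fun v => BW (x, v)) y (BW_dy x y).
Proof.
  intros Hy.
  apply (is_derive_ext_loc (fun v => ImLi2 (x, v) + ln (x ^ 2 + v ^ 2) / 2 * arg_line x v 1)).
  { eapply filter_imp; [|exact (continuous_locally_pos (fun v => v) y (continuous_id y) Hy)].
    intros; symmetry; now apply BW_arg_line. }
  assert (H1 := sqnorm_line_pos x y 1 Hy).
  eapply is_derive_eq.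
  { apply is_derive_Rplus; [now apply is_derive_ImLi2_y|]. apply is_derive_Rmult.
    - auto_derive; [nra|reflexivity].
    - apply (is_derive_Arg (fun _ => 1 - 1 * x) (fun v => - (1 * v)) y 0 (- 1)).
      + apply is_derive_Rconst.
      + auto_derive; [exact I|Rfield].
      + right. lra. }
  rewrite ImLi2_dy_closed by exact Hy. unfold BW_dy, sqnorm_line in *. Rfield. split; nra.
Qed.

Lemma differentiable_BW x y : 0 < y ->
  differentiable_pt_lim (fun u v => BW (u, v)) x y (BW_dx x y) (BW_dy x y).
Proof.
  intros Hy. apply filterdiff_differentiable_pt_lim.
  apply (is_derive_filterdiff (fun u v => BW (u, v)) x y BW_dx).
  - exists (mkposreal y Hy). intros [u v] [_ Hv].
    cbn in Hv; unfold AbsRing_ball, abs, minus, plus, opp in Hv; cbn in Hv.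
    apply Rabs_def2 in Hv. apply is_derive_BW_x. cbn. lra.
  - now apply is_derive_BW_y.
  - apply (continuity_2d_pt_filterlim BW_dx).
    assert (H1 := sqnorm_line_pos x y 1 Hy). unfold BW_dx, sqnorm_line in *.
    continuity_2d; cbn; try (intro; nra); nra.
Qed.

(** * Complex derivatives along real lines *)

Definition is_cderive (h : R -> C) (t : R) (l : C) :=
  is_derive (fun s => fst (h s)) t (fst l) /\ is_derive (fun s => snd (h s)) t (snd l).

Lemma is_cderive_eq h t l l' : is_cderive h t l -> l = l' -> is_cderive h t l'.
Proof. now intros H <-. Qed.

Lemma is_cderive_const (c : C) t : is_cderive (fun _ => c) t (RtoC 0).
Proof. split; apply is_derive_Rconst. Qed.

Lemma is_cderive_line (w d : C) t : is_cderive (fun s => Cplus w (Cmult (RtoC s) d)) t d.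
Proof. split; cbn; auto_derive; try exact I; Rring. Qed.

Lemma is_cderive_plus h1 h2 t l1 l2 : is_cderive h1 t l1 -> is_cderive h2 t l2 ->
  is_cderive (fun s => Cplus (h1 s) (h2 s)) t (Cplus l1 l2).
Proof. intros [A1 B1] [A2 B2]; split; cbn; now apply is_derive_Rplus. Qed.

Lemma is_cderive_minus h1 h2 t l1 l2 : is_cderive h1 t l1 -> is_cderive h2 t l2 ->
  is_cderive (fun s => Cminus (h1 s) (h2 s)) t (Cminus l1 l2).
Proof.
  intros [A1 B1] [A2 B2]; split; cbn; unfold Rminus;
    apply is_derive_Rplus; auto; now apply is_derive_Ropp.
Qed.

Lemma is_cderive_mult h1 h2 t l1 l2 : is_cderive h1 t l1 -> is_cderive h2 t l2 ->
  is_cderive (fun s => Cmult (h1 s) (h2 s)) t (Cplus (Cmult l1 (h2 t)) (Cmult (h1 t) l2)).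
Proof.
  intros [A1 B1] [A2 B2]; split; cbn.
  - eapply is_derive_eq; [apply is_derive_Rminus; apply is_derive_Rmult; eauto|Rring].
  - eapply is_derive_eq; [apply is_derive_Rplus; apply is_derive_Rmult; eauto|Rring].
Qed.

Lemma is_derive_Cinv_parts (a b : R -> R) t da db :
  is_derive a t da -> is_derive b t db -> a t ^ 2 + b t ^ 2 <> 0 ->
  is_derive (fun s => a s / (a s ^ 2 + b s ^ 2)) t
    ((da * (a t ^ 2 + b t ^ 2) - a t * (2 * a t * da + 2 * b t * db)) / (a t ^ 2 + b t ^ 2) ^ 2) /\
  is_derive (fun s => - b s / (a s ^ 2 + b s ^ 2)) t
    ((- db * (a t ^ 2 + b t ^ 2) + b t * (2 * a t * da + 2 * b t * db)) / (a t ^ 2 + b t ^ 2) ^ 2).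
Proof.
  intros A B H.
  assert (EA : Derive (fun s => a s) t = da) by now apply is_derive_unique.
  assert (EB : Derive (fun s => b s) t = db) by now apply is_derive_unique.
  split; auto_derive;
    try (repeat split; try (eexists; eassumption); auto; intros E; apply H; Rring);
    rewrite EA, EB; Rfield; auto.
Qed.

Lemma is_cderive_inv h t l : is_cderive h t l -> h t <> RtoC 0 ->
  is_cderive (fun s => Cinv (h s)) t (Copp (Cmult l (Cinv (Cmult (h t) (h t))))).
Proof.
  intros [A B] Hn.
  assert (Hq : fst (h t) ^ 2 + snd (h t) ^ 2 <> 0).
  { intros E. apply Hn. destruct (h t) as [p q]; cbn in *. unfold RtoC. f_equal; nra. }
  destruct (is_derive_Cinv_parts _ _ _ _ _ A B Hq) as [Hre Him].
  assert (Hq' : (fst (h t) * fst (h t) - snd (h t) * snd (h t)) ^ 2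
                + (fst (h t) * snd (h t) + snd (h t) * fst (h t)) ^ 2 <> 0).
  { intros E. apply (pow_nonzero _ 2) in Hq. apply Hq. rewrite <- E. Rring. }
  split; (eapply is_derive_eq; [eassumption|]);
    destruct l as [l1 l2]; destruct (h t) as [p q]; cbn in *; Rfield;
    (split; intros E; [apply Hq'|apply Hq]; rewrite <- E; ring).
Qed.

Definition is_holo_derive (F : C -> C) (z g : C) :=
  forall d, is_cderive (fun t => F (Cplus z (Cmult (RtoC t) d))) 0 (Cmult g d).

Lemma line_at_0 (z d : C) : Cplus z (Cmult (RtoC 0) d) = z.
Proof. apply injective_projections; cbn; ring. Qed.

Lemma is_holo_derive_eq F z g g' : is_holo_derive F z g -> g = g' -> is_holo_derive F z g'.
Proof. now intros H <-. Qed.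

Lemma is_holo_derive_const c z : is_holo_derive (fun _ => c) z (RtoC 0).
Proof. intros d. eapply is_cderive_eq; [apply is_cderive_const|ring]. Qed.

Lemma is_holo_derive_id z : is_holo_derive (fun x => x) z (RtoC 1).
Proof. intros d. eapply is_cderive_eq; [apply is_cderive_line|ring]. Qed.

Lemma is_holo_derive_plus F G z a b : is_holo_derive F z a -> is_holo_derive G z b ->
  is_holo_derive (fun x => Cplus (F x) (G x)) z (Cplus a b).
Proof. intros HF HG d. eapply is_cderive_eq; [apply is_cderive_plus; auto|ring]. Qed.

Lemma is_holo_derive_minus F G z a b : is_holo_derive F z a -> is_holo_derive G z b ->
  is_holo_derive (fun x => Cminus (F x) (G x)) z (Cminus a b).
Proof. intros HF HG d. eapply is_cderive_eq; [apply is_cderive_minus; auto|ring]. Qed.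

Lemma is_holo_derive_mult F G z a b : is_holo_derive F z a -> is_holo_derive G z b ->
  is_holo_derive (fun x => Cmult (F x) (G x)) z (Cplus (Cmult a (G z)) (Cmult (F z) b)).
Proof.
  intros HF HG d. eapply is_cderive_eq; [apply is_cderive_mult; auto|].
  cbv beta. rewrite line_at_0. ring.
Qed.

Lemma is_holo_derive_inv F z a : is_holo_derive F z a -> F z <> RtoC 0 ->
  is_holo_derive (fun x => Cinv (F x)) z (Copp (Cmult a (Cinv (Cmult (F z) (F z))))).
Proof.
  intros HF Hn d. eapply is_cderive_eq; [apply is_cderive_inv; auto|].
  - cbv beta. now rewrite line_at_0.
  - cbv beta. rewrite line_at_0. ring.
Qed.

Lemma is_holo_derive_div F G z a b : is_holo_derive F z a -> is_holo_derive G z b -> G z <> RtoC 0 ->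
  is_holo_derive (fun x => Cdiv (F x) (G x)) z
    (Cplus (Cmult a (Cinv (G z))) (Cmult (F z) (Copp (Cmult b (Cinv (Cmult (G z) (G z))))))).
Proof. intros. apply (is_holo_derive_mult F (fun x => Cinv (G x))); auto. now apply is_holo_derive_inv. Qed.

Ltac holo_derive := repeat lazymatch goal with
 | |- is_holo_derive (fun x => Cdiv _ _) _ _ => apply is_holo_derive_div
 | |- is_holo_derive (fun x => Cmult _ _) _ _ => apply is_holo_derive_mult
 | |- is_holo_derive (fun x => Cinv _) _ _ => apply is_holo_derive_inv
 | |- is_holo_derive (fun x => Cminus _ _) _ _ => apply is_holo_derive_minus
 | |- is_holo_derive (fun x => Cplus _ _) _ _ => apply is_holo_derive_plus
 | |- is_holo_derive (fun x => x) _ _ => apply is_holo_derive_id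
 | |- is_holo_derive (fun _ => ?c) _ _ => apply is_holo_derive_const
 | |- is_holo_derive (Cminus ?a) _ _ => apply (is_holo_derive_minus (fun _ => a) (fun x => x))
 | |- is_holo_derive (Cplus ?a) _ _ => apply (is_holo_derive_plus (fun _ => a) (fun x => x))
 | |- is_holo_derive (Cmult ?a) _ _ => apply (is_holo_derive_mult (fun _ => a) (fun x => x))
 | |- is_holo_derive (Cdiv ?a) _ _ => apply (is_holo_derive_div (fun _ => a) (fun x => x))
 end.

(** * The second derivative of the volume *)

Definition ratio (w : nat -> C) : C := Cdiv (Cminus (w 2%nat) (w 0%nat)) (Cminus (w 1%nat) (w 0%nat)).

Definition ratio_deriv (w : nat -> C) (j : nat) : C :=
  match j with
  | O => Cdiv (Cminus (w 2%nat) (w 1%nat)) (Cmult (Cminus (w 1%nat) (w 0%nat)) (Cminus (w 1%nat) (w 0%nat)))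
  | S O => Cdiv (Cminus (w 0%nat) (w 2%nat)) (Cmult (Cminus (w 1%nat) (w 0%nat)) (Cminus (w 1%nat) (w 0%nat)))
  | _ => Cinv (Cminus (w 1%nat) (w 0%nat))
  end.

Lemma Cmult_neq_0 (a b : C) : a <> RtoC 0 -> b <> RtoC 0 -> Cmult a b <> RtoC 0.
Proof.
  intros Ha Hb E. apply Hb.
  replace b with (Cmult (Cinv a) (Cmult a b)) by (field; exact Ha). rewrite E. ring.
Qed.

(* With Rocq's [x / 0 = 0], a degenerate edge would make [ratio w] zero. *)
Lemma ratio_im_pos_edge w : 0 < snd (ratio w) -> Cminus (w 1%nat) (w 0%nat) <> RtoC 0.
Proof.
  intros H E. unfold ratio in H. rewrite E in H. cbn in H.
  revert H; unfold Rdiv; match goal with |- 0 < ?e -> _ => replace e with 0 by ring end; lra.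
Qed.

Lemma is_holo_derive_ratio w i : (i < 3)%nat -> Cminus (w 1%nat) (w 0%nat) <> RtoC 0 ->
  is_holo_derive (fun x => ratio (upd w i x)) (w i) (ratio_deriv w i).
Proof.
  intros Hi Hn. unfold ratio, upd.
  destruct i as [|[|[|i]]]; [| | |lia]; cbn [Nat.eqb];
    (eapply is_holo_derive_eq; [holo_derive; auto|]); cbv beta; cbn [ratio_deriv]; field; auto.
Qed.

Lemma ex_holo_derive_ratio_deriv w i j : (i < 3)%nat -> (j < 3)%nat ->
  Cminus (w 1%nat) (w 0%nat) <> RtoC 0 ->
  exists g, is_holo_derive (fun x => ratio_deriv (upd w i x) j) (w i) g.
Proof.
  intros Hi Hj Hn. unfold upd.
  destruct i as [|[|[|i]]]; [| | |lia]; destruct j as [|[|[|j]]]; try lia; cbn [Nat.eqb ratio_deriv];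
    eexists; holo_derive; cbv beta; try apply Cmult_neq_0; auto.
Qed.

Lemma upd_same w j : upd w j (w j) = w.
Proof.
  apply functional_extensionality. intros k. unfold upd.
  destruct (Nat.eqb k j) eqn:E; auto. apply Nat.eqb_eq in E. now subst.
Qed.

Definition dbar_BW (u : C) : C := (BW_dx (fst u) (snd u) / 2, BW_dy (fst u) (snd u) / 2).

(* [- d^2 BW / du du-bar] at [u]. *)
Definition BW_hessian_coef (u : C) : R :=
  snd u / (2 * (fst u ^ 2 + snd u ^ 2) * sqnorm_line (fst u) (snd u) 1).

Definition dpath (F : R -> C) : C := (Derive (fun t => fst (F t)) 0, Derive (fun t => snd (F t)) 0).

Ltac rewrite_Derive_at_0 F :=
  let H := fresh "HD" in
  eassert (H : is_derive F 0 _);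
  [ cbn [dbar_BW Cmult Cconj fst snd]; unfold BW_dx, BW_dy, sqnorm_line; auto_derive;
    [ repeat split; try (eexists; eassumption); try (intro; nra); try nra | reflexivity ]
  | rewrite (is_derive_unique _ _ _ H); clear H ].

(* [X1 + i Y1], [P1 + i Q1] and [X2 + i Y2], [P2 + i Q2] are the values of [u] and of a
   holomorphic function of the configuration along two lines with directions [1] and [i]:
   holomorphy makes the derivatives along the second line [i] times those along the first. *)
Lemma mixed_wirtinger_dbar_BW (X1 Y1 P1 Q1 X2 Y2 P2 Q2 : R -> R) x y p q a b m n :
  X1 0 = x -> Y1 0 = y -> P1 0 = a -> Q1 0 = b -> X2 0 = x -> Y2 0 = y -> P2 0 = a -> Q2 0 = b ->
  is_derive X1 0 p -> is_derive Y1 0 q -> is_derive P1 0 m -> is_derive Q1 0 n ->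
  is_derive X2 0 (- q) -> is_derive Y2 0 p -> is_derive P2 0 (- n) -> is_derive Q2 0 m ->
  0 < y ->
  Copp (Cmult (RtoC (/ 2))
    (Cminus (dpath (fun t => Cmult (dbar_BW (X1 t, Y1 t)) (Cconj (P1 t, Q1 t))))
            (Cmult Ci (dpath (fun t => Cmult (dbar_BW (X2 t, Y2 t)) (Cconj (P2 t, Q2 t)))))))
  = Cmult (RtoC (BW_hessian_coef (x, y))) (Cmult (p, q) (Cconj (a, b))).
Proof.
  intros <- <- <- <- EX2 EY2 EP2 EQ2 DX1 DY1 DP1 DQ1 DX2 DY2 DP2 DQ2 Hy.
  assert (S1 := sqnorm_line_pos (X1 0) (Y1 0) 1 Hy). unfold sqnorm_line in S1.
  (* the denominators of [BW_dx], [BW_dy] in the form produced by [auto_derive] *)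
  assert (T1 : 0 < (1 + - (1 * X1 0)) * ((1 + - (1 * X1 0)) * 1) + 1 * Y1 0 * (1 * Y1 0 * 1)) by nra.
  assert (T2 : 0 < X1 0 * (X1 0 * 1) + Y1 0 * (Y1 0 * 1)) by nra.
  assert (E1 : Derive (fun t => X1 t) 0 = p) by now apply is_derive_unique.
  assert (E2 : Derive (fun t => Y1 t) 0 = q) by now apply is_derive_unique.
  assert (E3 : Derive (fun t => P1 t) 0 = m) by now apply is_derive_unique.
  assert (E4 : Derive (fun t => Q1 t) 0 = n) by now apply is_derive_unique.
  assert (E5 : Derive (fun t => X2 t) 0 = - q) by now apply is_derive_unique.
  assert (E6 : Derive (fun t => Y2 t) 0 = p) by now apply is_derive_unique.
  assert (E7 : Derive (fun t => P2 t) 0 = - n) by now apply is_derive_unique.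
  assert (E8 : Derive (fun t => Q2 t) 0 = m) by now apply is_derive_unique.
  unfold dpath.
  rewrite_Derive_at_0 (fun t => fst (Cmult (dbar_BW (X1 t, Y1 t)) (Cconj (P1 t, Q1 t)))).
  rewrite_Derive_at_0 (fun t => snd (Cmult (dbar_BW (X1 t, Y1 t)) (Cconj (P1 t, Q1 t)))).
  rewrite <- EX2, <- EY2 in T1, T2.
  rewrite_Derive_at_0 (fun t => fst (Cmult (dbar_BW (X2 t, Y2 t)) (Cconj (P2 t, Q2 t)))).
  rewrite_Derive_at_0 (fun t => snd (Cmult (dbar_BW (X2 t, Y2 t)) (Cconj (P2 t, Q2 t)))).
  rewrite E1, E2, E3, E4, E5, E6, E7, E8, EX2, EY2, EP2, EQ2.
  unfold BW_hessian_coef, sqnorm_line. apply injective_projections; cbn; Rfield; repeat split; try (intro; nra); nra.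
Qed.

Definition vertex_line (z : nat -> C) i d t := upd z i (Cplus (z i) (Cmult (RtoC t) d)).

Lemma locally_ratio_im_pos z i d : (i < 3)%nat -> 0 < snd (ratio z) ->
  locally 0 (fun t => 0 < snd (ratio (vertex_line z i d t))).
Proof.
  intros Hi Hy.
  destruct (is_holo_derive_ratio z i Hi (ratio_im_pos_edge z Hy) d) as [_ HY].
  apply (continuous_locally_pos (fun t => snd (ratio (vertex_line z i d t)))).
  - exact (is_derive_continuous _ _ _ HY).
  - unfold vertex_line. now rewrite line_at_0, upd_same.
Qed.

Lemma pd_Vol w j d : (j < 3)%nat -> 0 < snd (ratio w) ->
  pd (fun w' => RtoC (Vol w')) j d w =
  RtoC (BW_dx (fst (ratio w)) (snd (ratio w)) * fst (Cmult (ratio_deriv w j) d)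
        + BW_dy (fst (ratio w)) (snd (ratio w)) * snd (Cmult (ratio_deriv w j) d)).
Proof.
  intros Hj Hy.
  destruct (is_holo_derive_ratio w j Hj (ratio_im_pos_edge w Hy) d) as [HX HY].
  unfold pd, RtoC. cbn [fst snd]. f_equal; [|apply Derive_const].
  apply is_derive_unique, is_derive_Reals.
  apply (derivable_pt_lim_comp_2d (fun u v => BW (u, v))
    (fun t => fst (ratio (vertex_line w j d t))) (fun t => snd (ratio (vertex_line w j d t))));
    [|now apply is_derive_Reals..].
  unfold vertex_line. rewrite line_at_0, upd_same. now apply differentiable_BW.
Qed.

Lemma wzbar_Vol w j : (j < 3)%nat -> 0 < snd (ratio w) ->
  wzbar (fun w' => RtoC (Vol w')) j w = Cmult (dbar_BW (ratio w)) (Cconj (ratio_deriv w j)).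
Proof.
  intros Hj Hy. unfold wzbar. rewrite !pd_Vol by auto.
  unfold dbar_BW. apply injective_projections; cbn; field.
Qed.

Lemma Dmat_formula z i j : (i < 3)%nat -> (j < 3)%nat -> 0 < snd (ratio z) ->
  Dmat z i j = Cmult (RtoC (BW_hessian_coef (ratio z))) (Cmult (ratio_deriv z i) (Cconj (ratio_deriv z j))).
Proof.
  intros Hi Hj Hy.
  assert (Hn := ratio_im_pos_edge z Hy).
  destruct (ex_holo_derive_ratio_deriv z i j Hi Hj Hn) as [g Hg].
  destruct (is_holo_derive_ratio z i Hi Hn (RtoC 1)) as [HX1 HY1].
  destruct (is_holo_derive_ratio z i Hi Hn Ci) as [HX2 HY2].
  destruct (Hg (RtoC 1)) as [HP1 HQ1].
  destruct (Hg Ci) as [HP2 HQ2].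
  assert (Hpd : forall d, pd (fun w => wzbar (fun w' => RtoC (Vol w')) j w) i d z =
    dpath (fun t => Cmult (dbar_BW (fst (ratio (vertex_line z i d t)), snd (ratio (vertex_line z i d t))))
                          (Cconj (fst (ratio_deriv (vertex_line z i d t) j),
                                  snd (ratio_deriv (vertex_line z i d t) j))))).
  { intros d. unfold pd, dpath. f_equal; apply Derive_ext_loc;
      eapply filter_imp; try exact (locally_ratio_im_pos z i d Hi Hy);
      intros t Ht; rewrite <- !surjective_pairing, wzbar_Vol by assumption; reflexivity. }
  unfold Dmat, wz. rewrite !Hpd.
  rewrite (surjective_pairing (ratio z)), (surjective_pairing (ratio_deriv z i)),
    (surjective_pairing (ratio_deriv z j)).
  apply (mixed_wirtinger_dbar_BW _ _ _ _ _ _ _ _ _ _ _ _ _ _ (fst g) (snd g));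
    try (unfold vertex_line; rewrite line_at_0, upd_same; reflexivity); try assumption;
    (eapply is_derive_eq; [eassumption|]); first [destruct (ratio_deriv z i) | destruct g]; cbn; Rring.
Qed.

(** * Circumradius and discrete derivatives *)

(* The circumcircle of [0], [a], [b] has centre [p] and squared radius [r2]; this is
   [R = |a| |b| |a - b| / (4 Area)]. *)
Lemma circumradius_sq (a1 a2 b1 b2 p1 p2 r2 : R) :
  p1 ^ 2 + p2 ^ 2 = r2 -> (p1 - a1) ^ 2 + (p2 - a2) ^ 2 = r2 -> (p1 - b1) ^ 2 + (p2 - b2) ^ 2 = r2 ->
  a1 * b2 - a2 * b1 <> 0 ->
  4 * (a1 * b2 - a2 * b1) ^ 2 * r2 = (a1 ^ 2 + a2 ^ 2) * (b1 ^ 2 + b2 ^ 2) * ((a1 - b1) ^ 2 + (a2 - b2) ^ 2).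
Proof.
  intros H0 H1 H2 Hd.
  assert (La : a1 * p1 + a2 * p2 = (a1 ^ 2 + a2 ^ 2) / 2) by nra.
  assert (Lb : b1 * p1 + b2 * p2 = (b1 ^ 2 + b2 ^ 2) / 2) by nra.
  assert (P1 : p1 * (a1 * b2 - a2 * b1) = ((a1 ^ 2 + a2 ^ 2) * b2 - (b1 ^ 2 + b2 ^ 2) * a2) / 2).
  { replace (p1 * (a1 * b2 - a2 * b1)) with (b2 * (a1 * p1 + a2 * p2) - a2 * (b1 * p1 + b2 * p2)) by ring.
    rewrite La, Lb. field. }
  assert (P2 : p2 * (a1 * b2 - a2 * b1) = ((b1 ^ 2 + b2 ^ 2) * a1 - (a1 ^ 2 + a2 ^ 2) * b1) / 2).
  { replace (p2 * (a1 * b2 - a2 * b1)) with (a1 * (b1 * p1 + b2 * p2) - b1 * (a1 * p1 + a2 * p2)) by ring.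
    rewrite La, Lb. field. }
  rewrite <- H0.
  replace (4 * (a1 * b2 - a2 * b1) ^ 2 * (p1 ^ 2 + p2 ^ 2)) with
    (4 * ((p1 * (a1 * b2 - a2 * b1)) ^ 2 + (p2 * (a1 * b2 - a2 * b1)) ^ 2)) by ring.
  rewrite P1, P2. field.
Qed.

Definition edge1 (z : nat -> C) := Cminus (z 1%nat) (z 0%nat).
Definition edge2 (z : nat -> C) := Cminus (z 2%nat) (z 0%nat).
Definition cross (a b : C) := fst a * snd b - snd a * fst b.
Definition sqnorm (a : C) := fst a ^ 2 + snd a ^ 2.

Lemma Area_cross z : Area z = RtoC (cross (edge1 z) (edge2 z) / 2).
Proof. unfold Area, cross, edge1, edge2. apply injective_projections; cbn; Rfield. Qed.

Lemma sqnorm_eq_0 a : sqnorm a = 0 -> a = RtoC 0.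
Proof.
  unfold sqnorm. destruct a as [a1 a2]; cbn. intros H.
  assert (a1 = 0) by nra. assert (a2 = 0) by nra. now subst.
Qed.

Lemma sqnorm_cross_neq_0 a b : cross a b <> 0 -> sqnorm a <> 0.
Proof. intros Hc Ha. apply sqnorm_eq_0 in Ha. subst. apply Hc. unfold cross; cbn; ring. Qed.

Lemma ratio_coords z : sqnorm (edge1 z) <> 0 ->
  ratio z = ((fst (edge2 z) * fst (edge1 z) + snd (edge2 z) * snd (edge1 z)) / sqnorm (edge1 z),
             cross (edge1 z) (edge2 z) / sqnorm (edge1 z)).
Proof.
  unfold sqnorm, cross, ratio, edge1, edge2. intros H.
  apply injective_projections; cbn in *; Rfield; intros E; apply H; rewrite <- E; ring.
Qed.

Lemma ratio_im_pos z : 0 < cross (edge1 z) (edge2 z) -> 0 < snd (ratio z).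
Proof.
  intros Hd. assert (Ha := sqnorm_cross_neq_0 _ (edge2 z) (Rgt_not_eq _ _ Hd)).
  rewrite ratio_coords by exact Ha. cbn. apply Rdiv_lt_0_compat; [exact Hd|].
  unfold sqnorm in *. assert (0 <= fst (edge1 z) ^ 2) by apply pow2_ge_0.
  assert (0 <= snd (edge1 z) ^ 2) by apply pow2_ge_0. lra.
Qed.

Lemma Cmod_sq_coords (w c : C) r : Cmod (Cminus w c) = r -> r ^ 2 = (fst w - fst c) ^ 2 + (snd w - snd c) ^ 2.
Proof.
  intros <-. unfold Cmod. rewrite pow2_sqrt.
  - cbn. Rring.
  - apply Rplus_le_le_0_compat; apply pow2_ge_0.
Qed.

Lemma circumradius_sq_edges z c r : cross (edge1 z) (edge2 z) <> 0 ->
  (forall k, (k < 3)%nat -> Cmod (Cminus (z k) c) = r) ->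
  4 * cross (edge1 z) (edge2 z) ^ 2 * r ^ 2
  = sqnorm (edge1 z) * sqnorm (edge2 z) * sqnorm (Cminus (edge1 z) (edge2 z)).
Proof.
  intros Hd Hc.
  assert (E0 := Cmod_sq_coords _ _ _ (Hc 0%nat ltac:(lia))).
  assert (E1 := Cmod_sq_coords _ _ _ (Hc 1%nat ltac:(lia))).
  assert (E2 := Cmod_sq_coords _ _ _ (Hc 2%nat ltac:(lia))).
  unfold sqnorm, cross, edge1, edge2 in *.
  apply (circumradius_sq _ _ _ _ (fst c - fst (z 0%nat)) (snd c - snd (z 0%nat)));
    [rewrite E0; cbn; ring|rewrite E1; cbn; ring|rewrite E2; cbn; ring|exact Hd].
Qed.

Lemma BW_hessian_coef_ratio z c r : 0 < cross (edge1 z) (edge2 z) ->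
  (forall k, (k < 3)%nat -> Cmod (Cminus (z k) c) = r) ->
  BW_hessian_coef (ratio z) = sqnorm (edge1 z) ^ 2 / (8 * cross (edge1 z) (edge2 z) * r ^ 2).
Proof.
  intros Hd Hc.
  assert (Hd0 : cross (edge1 z) (edge2 z) <> 0) by lra.
  assert (Ha := sqnorm_cross_neq_0 _ _ Hd0).
  assert (Hb : sqnorm (edge2 z) <> 0)
    by (apply (sqnorm_cross_neq_0 _ (edge1 z));
        replace (cross _ _) with (- cross (edge1 z) (edge2 z)) by (unfold cross; ring); lra).
  assert (Hab : sqnorm (Cminus (edge1 z) (edge2 z)) <> 0).
  { apply (sqnorm_cross_neq_0 _ (edge2 z)).
    replace (cross _ _) with (cross (edge1 z) (edge2 z)) by (unfold cross; cbn; ring). exact Hd0. }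
  assert (Hr := circumradius_sq_edges z c r Hd0 Hc).
  assert (Hr2 : r ^ 2 = sqnorm (edge1 z) * sqnorm (edge2 z) * sqnorm (Cminus (edge1 z) (edge2 z))
                        / (4 * cross (edge1 z) (edge2 z) ^ 2)) by (rewrite <- Hr; field; exact Hd0).
  rewrite Hr2, ratio_coords by exact Ha.
  set (a := edge1 z) in *. set (b := edge2 z) in *. clearbody a b.
  destruct a as [a1 a2], b as [b1 b2].
  unfold BW_hessian_coef, sqnorm_line, sqnorm, cross in *. cbn in *.
  field. repeat split; intros E.
  - lra.
  - apply Hab. rewrite <- E. ring.
  - apply Hb. rewrite <- E. ring.
  - apply Ha. rewrite <- E. ring.
  - apply (Rmult_integral_contrapositive_currified _ _ Ha Hab). rewrite <- E. ring.
  - apply (Rmult_integral_contrapositive_currified _ _ Ha Hb). rewrite <- E. ring.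
Qed.

Definition nabla_numerator (z : nat -> C) (Phi : nat -> C) : C :=
  Cplus (Cplus (Cmult (Phi 0%nat) (Cminus (z 2%nat) (z 1%nat)))
               (Cmult (Phi 1%nat) (Cminus (z 0%nat) (z 2%nat))))
        (Cmult (Phi 2%nat) (Cminus (z 1%nat) (z 0%nat))).

Lemma nablabar_numerator z Phi :
  nablabar z Phi = Copp (Cdiv (nabla_numerator z Phi) (Cmult (Cmult (RtoC 4) Ci) (Area z))).
Proof. reflexivity. Qed.

Lemma nabla_conj_numerator z Psi :
  nabla z (fun k => Cconj (Psi k)) = Cdiv (Cconj (nabla_numerator z Psi)) (Cmult (Cmult (RtoC 4) Ci) (Area z)).
Proof. unfold nabla, nabla_numerator. now rewrite !Cplus_conj, !Cmult_conj, !Cminus_conj. Qed.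

Lemma sum_ratio_deriv z Phi : edge1 z <> RtoC 0 ->
  sum3 (fun i => Cmult (Phi i) (ratio_deriv z i)) = Cdiv (nabla_numerator z Phi) (Cmult (edge1 z) (edge1 z)).
Proof. intros Ha. unfold sum3, nabla_numerator, edge1 in *. cbn [ratio_deriv]. field. exact Ha. Qed.

Lemma sum3_rank_one (M : nat -> nat -> C) (k : C) (U Phi Psi : nat -> C) :
  (forall i j, (i < 3)%nat -> (j < 3)%nat -> M i j = Cmult k (Cmult (U i) (Cconj (U j)))) ->
  sum3 (fun i => sum3 (fun j => Cmult (Cmult (Phi i) (M i j)) (Cconj (Psi j)))) =
  Cmult k (Cmult (sum3 (fun i => Cmult (Phi i) (U i))) (Cconj (sum3 (fun j => Cmult (Psi j) (U j))))).
Proof. intros HM. unfold sum3. rewrite !HM by lia. rewrite !Cplus_conj, !Cmult_conj. ring. Qed.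

Lemma RtoC_sqnorm a : RtoC (sqnorm a) = Cmult a (Cconj a).
Proof. unfold sqnorm. apply injective_projections; cbn; ring. Qed.

Lemma RtoC_neq_0 r : r <> 0 -> RtoC r <> RtoC 0.
Proof. intros H E. apply H. now injection E. Qed.

Lemma Ci_4_sq (A : C) :
  Cmult (Cmult (Cmult (RtoC 4) Ci) A) (Cmult (Cmult (RtoC 4) Ci) A) = Copp (Cmult (RtoC 16) (Cmult A A)).
Proof. apply injective_projections; cbn; ring. Qed.

Lemma circumradius_neq_0 z c r : edge1 z <> RtoC 0 ->
  (forall k, (k < 3)%nat -> Cmod (Cminus (z k) c) = r) -> r <> 0.
Proof.
  intros Ha Hc Hr. subst r. apply Ha.
  assert (E0 := Cmod_eq_0 _ (Hc 0%nat ltac:(lia))).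
  assert (E1 := Cmod_eq_0 _ (Hc 1%nat ltac:(lia))).
  unfold edge1. replace (z 1%nat) with (Cplus c (Cminus (z 1%nat) c)) by ring.
  replace (z 0%nat) with (Cplus c (Cminus (z 0%nat) c)) by ring.
  rewrite E0, E1. ring.
Qed.

Lemma rank_one_eq_area_nabla (a N M : C) (X Y : R) : a <> RtoC 0 -> X <> 0 -> Y <> 0 ->
  Cmult (RtoC (sqnorm a ^ 2 / (8 * X * Y)))
        (Cmult (Cdiv N (Cmult a a)) (Cconj (Cdiv M (Cmult a a)))) =
  Cmult (Cdiv (RtoC (X / 2)) (RtoC Y))
        (Cmult (Copp (Cdiv N (Cmult (Cmult (RtoC 4) Ci) (RtoC (X / 2)))))
               (Cdiv (Cconj M) (Cmult (Cmult (RtoC 4) Ci) (RtoC (X / 2))))).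
Proof.
  intros Ha HX HY.
  assert (Haa : Cmult a a <> RtoC 0) by now apply Cmult_neq_0.
  assert (Hca : Cconj a <> RtoC 0).
  { intros E. apply Ha. rewrite <- (Cconj_conj a), E. apply injective_projections; cbn; ring. }
  replace (Cmult (Copp (Cdiv N _)) (Cdiv (Cconj M) _)) with
    (Copp (Cdiv (Cmult N (Cconj M)) (Cmult (Cmult (Cmult (RtoC 4) Ci) (RtoC (X / 2)))
                                           (Cmult (Cmult (RtoC 4) Ci) (RtoC (X / 2))))))
    by (field; repeat split; first [assumption | apply RtoC_neq_0; lra | intros E; injection E; lra]).
  rewrite Ci_4_sq, Cdiv_conj, Cmult_conj by exact Haa.
  rewrite RtoC_div, !RtoC_mult, RtoC_pow, RtoC_sqnorm
    by (repeat apply Rmult_integral_contrapositive_currified; lra).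
  rewrite RtoC_div by lra.
  field; repeat split; first [assumption | apply RtoC_neq_0; lra | intros E; injection E; lra].
Qed.

Theorem proposition2 (z : nat -> C) (c : C) (Rc : R)
  (Hccw : (0 < fst (Area z))%R)
  (Hcirc : forall k : nat, (k < 3)%nat -> Cmod (Cminus (z k) c) = Rc)
  (Phi Psi : nat -> C) :
  sum3 (fun i => sum3 (fun j => Cmult (Cmult (Phi i) (Dmat z i j)) (Cconj (Psi j)))) =
  Cmult (Cdiv (Area z) (RtoC (Rc ^ 2)))
        (Cmult (nablabar z Phi) (nabla z (fun k => Cconj (Psi k)))).
Proof.
  assert (Hd : 0 < cross (edge1 z) (edge2 z)) by (rewrite Area_cross in Hccw; cbn in Hccw; lra).
  assert (Hy := ratio_im_pos z Hd).
  assert (Ha : edge1 z <> RtoC 0) by exact (ratio_im_pos_edge z Hy).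
  rewrite (sum3_rank_one (Dmat z) _ (ratio_deriv z)) by (intros; now apply Dmat_formula).
  rewrite !sum_ratio_deriv, (BW_hessian_coef_ratio z c Rc Hd Hcirc) by exact Ha.
  rewrite nablabar_numerator, nabla_conj_numerator, Area_cross.
  apply rank_one_eq_area_nabla; [exact Ha|lra|].
  apply pow_nonzero, (circumradius_neq_0 z c Rc Ha Hcirc).
Qed.
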